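(* Fix a context-free grammar $G=(N,\Sigma,P,S)$. Let $M=(V,E,L)$ be a finite directed edge-labeled graph with $L\subseteq\Sigma$, $E\subseteq V\times L\times V$, and no two parallel edges with the same label, and let $V_s,V_f\subseteq V$ be sets of start and final vertices. Then the worst-case running time of the GLL-based graph parsing algorithm (described in the context) run on $G$ and $M$ is $$O\left(|V|^3\cdot\max_{v\in V}\deg^+(v)\right),$$ where $\deg^+(v)$ is the out-degree of $v$ in $M$, the constants depending only on $G$.
   Context: Paths and queries: a path in $M$ is a sequence of edges $(v_0,l_0,v_1),(v_1,l_1,v_2),\dots,(v_{n-1},l_{n-1},v_n)$ with $n\ge 1$; its word is $l_0l_1\cdots l_{n-1}$. The algorithm builds a representation of all paths $p$ from a vertex of $V_s$ to a vertex of $V_f$ whose word belongs to $\mathcal{L}(G)$. The GLL-based graph parsing algorithm: it is the table-driven generalized LL (GLL) parsing algorithm in which input positions are vertices of $M$ instead of indices into a string. A grammar slot is a production with a dot, $X\to\alpha\cdot\beta$. The algorithm maintains a graph-structured stack (GSS) whose nodes are labeled by pairs (grammar slot, vertex); descriptors $(L,u,i,w)$ with $L$ a grammar slot, $u$ a GSS node, $i\in V$ the current position and $w$ an SPPF node (or a dummy); a working set $R$ of descriptors to process, a set $U$ of all descriptors ever created (a descriptor is added to $R$ only if it is not already in $U$), and a set $P$ of popped (GSS node, SPPF node) pairs. Initially $R$ contains one initial descriptor for each vertex in $V_s$. Processing a descriptor at slot $X\to\alpha\cdot x\beta$ at vertex $i$: if $x$ is a terminal, then for every outgoing edge $e$ of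 $i$ with label $x$, the terminal SPPF node for $e$ is created/reused, combined with the current SPPF node, and a descriptor with slot $X\to\alpha x\cdot\beta$ and position the target of $e$ is added; if $x$ is a nonterminal, a GSS node for $(X\to\alpha x\cdot\beta, i)$ is created/reused (with an edge to the current GSS node labeled by the current SPPF node), and for every slot in the union, over outgoing edges $e$ of $i$, of the LL parse-table entries for $x$ and the label of $e$, a descriptor at position $i$ is added; at a slot $X\to\alpha\cdot$ the standard GLL pop operation is performed. All other operations (add, pop, create, SPPF node construction) are those of standard GLL. The algorithm terminates when $R$ is empty. The output is a binarized Shared Packed Parse Forest (SPPF) with terminal nodes $(v_0,T,v_1)$ for edges $(v_0,T,v_1)\in E$, $\varepsilon$-nodes $(v,\varepsilon,v)$, nonterminal nodes $(v_0,A,v_1)$, intermediate nodes $(v_0,t,v_1)$ with $t$ a grammar slot, and packed nodes $(A\to\alpha\cdot\beta,v)$ (children of nonterminal/intermediate nodes, with at most two children), each node created at most once per label. *)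

From mathcomp Require Import all_boot.
Set Implicit Arguments.
Unset Strict Implicit.
Unset Printing Implicit Defensive.

Record grammar (N T : finType) := Grammar {
  prods : seq (N * seq (N + T));
  start : N }.

Section LL.
Variables (N T : finType) (G : grammar N T).

Definition sym := (N + T)%type.

Definition nullable_step (A : {set N}) : {set N} :=
  [set X | has (fun p : N * seq sym => (p.1 == X) &&
       all (fun s : sym => if s is inl Y then Y \in A else false) p.2) (prods G)].
Definition nullableN : {set N} := fixset nullable_step.
Definition nullable_seq (s : seq sym) : bool :=
  all (fun x : sym => if x is inl Y then Y \in nullableN else false) s.

(* a \in FIRST(s), relative to a FIRST table F for nonterminals *)
Fixpoint first_seq (F : {set N * T}) (s : seq sym) (a : T) : bool :=
  match s with
  | [::] => false
  | inr b :: _ => b == a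
  | inl Y :: s' => ((Y, a) \in F) || ((Y \in nullableN) && first_seq F s' a)
  end.

Definition first_step (F : {set N * T}) : {set N * T} :=
  [set xa : N * T | has (fun p : N * seq sym =>
      (p.1 == xa.1) && first_seq F p.2 xa.2) (prods G)].
Definition FIRST : {set N * T} := fixset first_step.

(* FOLLOW sets (no end-marker: lookahead symbols are edge labels) *)
Definition follow_step (Fo : {set N * T}) : {set N * T} :=
  [set xa : N * T | has (fun p : N * seq sym =>
     has (fun k => match drop k p.2 with
                   | inl Y :: beta => (Y == xa.1) &&
                       (first_seq FIRST beta xa.2 ||
                        (nullable_seq beta && ((p.1, xa.2) \in Fo)))
                   | _ => false end) (iota 0 (size p.2))) (prods G)].
Definition FOLLOW : {set N * T} := fixset follow_step.

(* grammar slot X -> alpha . beta, represented as (X, alpha, beta) *)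
Definition slot := (N * seq sym * seq sym)%type.

Definition ll_table (X : N) (a : T) : seq slot :=
  [seq ((p.1, [::], p.2) : slot) | p <- prods G &
     (p.1 == X) && (first_seq FIRST p.2 a ||
                    (nullable_seq p.2 && ((X, a) \in FOLLOW)))].
End LL.

Section GLL.
Variables (N T : finType) (G : grammar N T) (V : finType) (E : {set V * T * V}).

(* SPPF node labels: terminal, epsilon, nonterminal, intermediate (slot) *)
Definition label := (T + (unit + (N + slot N T)))%type.
(* SPPF node (left extent, label, right extent); None is the dummy node $ *)
Definition sppf := option (V * label * V).
(* GSS node (slot, vertex); None is the GSS root u0 *)
Definition gss := option (slot N T * V).
(* descriptor (L, u, i, w); L = None marks the initial descriptor *)
Definition desc := (option (slot N T) * gss * V * sppf)%type.

Record state := State {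
  R_ : seq desc;
  U_ : seq desc;                  (* all descriptors ever created *)
  P_ : seq (gss * sppf);          (* popped pairs *)
  GE_ : seq (gss * sppf * gss) }. (* GSS edges (source, label, target) *)

Definition out_edges (i : V) : seq (V * T * V) := [seq e <- enum E | e.1.1 == i].
Definition outdeg (i : V) : nat := size (out_edges i).

Definition dispatch (X : N) (i : V) : seq (slot N T) :=
  undup (flatten [seq ll_table G X e.1.2 | e <- out_edges i]).

Definition add (st : state) (d : desc) : state :=
  if d \in U_ st then st else State (d :: R_ st) (d :: U_ st) (P_ st) (GE_ st).
Definition add_all (st : state) (ds : seq desc) : state := foldl add st ds.

Definition getNodeP (L : slot N T) (w z : sppf) : sppf :=
  match z with
  | None => None
  | Some (k, _, i) =>
    if (size L.1.2 == 1) && (L.2 != [::]) then z else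
    let lab : label := if L.2 == [::] then inr (inr (inl L.1.1))
                       else inr (inr (inr L)) in
    match w with
    | None => Some (k, lab, i)
    | Some (j, _, _) => Some (j, lab, i)
    end
  end.

Definition rext (z : sppf) (d : V) : V := if z is Some (_, _, h) then h else d.

(* create: returns the GSS node, the new state and the elementary cost *)
Definition create (L : slot N T) (u : gss) (i : V) (w : sppf) (st : state)
  : gss * state * nat :=
  let v : gss := Some (L, i) in
  if (v, w, u) \in GE_ st then (v, st, 1) else
  let st1 := State (R_ st) (U_ st) (P_ st) ((v, w, u) :: GE_ st) in
  let zs := [seq pz.2 | pz <- P_ st & pz.1 == v] in
  (v, add_all st1 [seq ((Some L, u, rext z i, getNodeP L w z) : desc) | z <- zs],
   1 + size zs).

Definition pop (u : gss) (i : V) (z : sppf) (st : state) : state * nat :=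
  match u with
  | None => (st, 1)
  | Some (L, _) =>
    let st1 := if (u, z) \in P_ st then st
               else State (R_ st) (U_ st) ((u, z) :: P_ st) (GE_ st) in
    let es := [seq e <- GE_ st | e.1.1 == u] in
    (add_all st1 [seq ((Some L, e.2, i, getNodeP L e.1.2 z) : desc) | e <- es],
     1 + size es)
  end.

Definition process (d : desc) (st : state) : state * nat :=
  let '(ol, u, i, w) := d in
  match ol with
  | None =>
    let ls := dispatch (start G) i in
    (add_all st [seq ((Some L, u, i, None) : desc) | L <- ls], 1 + outdeg i + size ls)
  | Some L =>
    let '(X, alpha, beta) := L in
    match beta with
    | [::] =>
      if alpha is [::]
      then pop u i (getNodeP L w (Some (i, inr (inl tt), i))) st
      else pop u i w st
    | inr a :: beta' =>
      let L' : slot N T := (X, rcons alpha (inr a), beta') in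
      let es := [seq e <- out_edges i | e.1.2 == a] in
      (add_all st [seq ((Some L', u, e.2, getNodeP L' w (Some (i, inl a, e.2))) : desc)
                  | e <- es], 1 + outdeg i)
    | inl Y :: beta' =>
      let L' : slot N T := (X, rcons alpha (inl Y), beta') in
      let '(v, st1, c) := create L' u i w st in
      let ls := dispatch Y i in
      (add_all st1 [seq ((Some L0, v, i, None) : desc) | L0 <- ls], c + outdeg i + size ls)
    end
  end.

Definition init (Vs : {set V}) : state :=
  let ds := [seq ((None, None, v, None) : desc) | v <- enum Vs] in
  State ds ds [::] [::].

(* runs st st' c : from st the algorithm can reach st' (any choice of
   descriptor removed from R at each step) with total elementary cost c *)
Inductive runs : state -> state -> nat -> Prop :=
| runs_refl st : runs st st 0
| runs_step st d st' c st'' c' :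
    d \in R_ st ->
    process d (State (rem d (R_ st)) (U_ st) (P_ st) (GE_ st)) = (st', c) ->
    runs st' st'' c' -> runs st st'' (c + c').

End GLL.

From mathcomp Require Import all_boot zify.

Set Implicit Arguments.
Unset Strict Implicit.
Unset Printing Implicit Defensive.

(* Every step removes one descriptor from R, and a descriptor enters R only when
   it is first added to U, so there are at most |U| steps.  An invariant keeps
   every descriptor well formed: its SPPF node spans the input from the vertex
   of its GSS node to its current position.  A descriptor is therefore fixed by
   two grammar slots, two vertices and an SPPF label, so |U| = O(|V|^2).  For the
   same reason a GSS node has O(|V|) outgoing edges and O(|V|) popped SPPF
   nodes, which bounds the cost of pop and create, while the lookahead work of a
   step is bounded by the out-degree d.  The total cost is O(|V|^2 (|V| + d)). *)

Lemma size_le_inj_in (A B : eqType) (f : A -> B) (s : seq A) (t : seq B) :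
  uniq s -> {in s &, injective f} -> {in s, forall x, f x \in t} ->
  size s <= size t.
Proof.
move=> s_uniq f_inj f_t; rewrite -(size_map f).
apply: uniq_leq_size; first by rewrite map_inj_in_uniq.
by move=> _ /mapP [x x_s ->]; apply: f_t.
Qed.

Definition pairs (A B : Type) (s : seq A) (t : seq B) : seq (A * B) :=
  [seq (x, y) | x <- s, y <- t].

Lemma mem_pairs (A B : eqType) (s : seq A) (t : seq B) x y :
  ((x, y) \in pairs s t) = (x \in s) && (y \in t).
Proof.
apply/allpairsP/andP => [[[x' y'] [/= x's y't [-> ->]]] // | [x_s y_t]].
by exists (x, y).
Qed.

Lemma size_pairs (A B : Type) (s : seq A) (t : seq B) :
  size (pairs s t) = size s * size t.
Proof. exact: size_allpairs. Qed.

Definition opts (A : Type) (s : seq A) : seq (option A) := None :: map Some s.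

Lemma mem_opts (A : eqType) (s : seq A) (o : option A) :
  (o \in opts s) = oapp (mem s) true o.
Proof. by case: o => [x|] //=; rewrite inE /= mem_map //; apply: Some_inj. Qed.

Lemma size_opts (A : Type) (s : seq A) : size (opts s) = (size s).+1.
Proof. by rewrite /= size_map. Qed.

Lemma add_allE (N T V : finType) (st : state N T V) (ds : seq (desc N T V)) :
  exists new, [/\ {subset new <= ds}, uniq (U_ st) -> uniq (new ++ U_ st)
    & add_all st ds = State (new ++ R_ st) (new ++ U_ st) (P_ st) (GE_ st)].
Proof.
elim: ds st => [|d ds IHds] [R U P GE] /=; first by exists [::].
rewrite {1}/add /=; case: ifPn => [_ | d_notin_U].
  have [new [new_ds new_uniq ->]] := IHds (State R U P GE).
  by exists new; split=> // x /new_ds; rewrite inE orbC => ->.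
have [new [new_ds new_uniq ->]] := IHds (State (d :: R) (d :: U) P GE).
exists (rcons new d); rewrite !cat_rcons; split=> //=.
- by move=> x; rewrite mem_rcons !inE => /orP [-> | /new_ds ->]; rewrite ?orbT.
- by move=> U_uniq; apply: new_uniq; rewrite /= d_notin_U.
Qed.

Lemma sq_mul_le_cube n d : n ^ 2 * (n + d).+1 <= 3 * n ^ 3 * maxn 1 d.
Proof.
case: n => [|n]; first by rewrite !mul0n.
have m_ge1 : 1 <= maxn 1 d by rewrite leq_maxl.
have d_le : d <= maxn 1 d by rewrite leq_maxr.
move: (maxn 1 d) m_ge1 d_le => m; nia.
Qed.

Section GLLComplexity.
Variables (N T : finType) (G : grammar N T).

Local Notation slot := (slot N T).
Local Notation label := (label N T).

Definition valid_slot (L : slot) : bool := (L.1.1, L.1.2 ++ L.2) \in prods G.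

Definition valid_label (l : label) : bool :=
  if l is inr (inr (inr L)) then valid_slot L else true.

Definition slots : seq slot :=
  flatten [seq [seq (p.1, take k p.2, drop k p.2) | k <- iota 0 (size p.2).+1]
          | p <- prods G].

Lemma mem_slots L : valid_slot L -> L \in slots.
Proof.
case: L => [[X alpha] beta] /= L_valid; apply/flattenP.
exists [seq (X, take k (alpha ++ beta), drop k (alpha ++ beta))
       | k <- iota 0 (size (alpha ++ beta)).+1].
  by apply/mapP; exists (X, alpha ++ beta).
apply/mapP; exists (size alpha); first by rewrite mem_iota size_cat; lia.
by rewrite take_size_cat // drop_size_cat.
Qed.

Definition labels : seq label :=
  [seq inl a | a <- enum T] ++ inr (inl tt) :: [seq inr (inr (inl X)) | X <- enum N]
  ++ [seq inr (inr (inr L)) | L <- slots].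

Lemma mem_labels l : valid_label l -> l \in labels.
Proof.
rewrite /labels !(mem_cat, inE).
case: l => [a | [[] | [X | L]]] /= l_valid.
- by rewrite map_f ?mem_enum.
- by rewrite !orbT.
- by rewrite map_f ?mem_enum ?orbT.
- by rewrite map_f ?orbT ?mem_slots.
Qed.

Lemma valid_slot_shift X alpha x beta :
  valid_slot (X, alpha, x :: beta) -> valid_slot (X, rcons alpha x, beta).
Proof. by rewrite /valid_slot /= cat_rcons. Qed.

Variables (V : finType) (E : {set V * T * V}).

Local Notation gss := (gss N T V).
Local Notation sppf := (sppf N T V).
Local Notation desc := (desc N T V).
Local Notation state := (state N T V).

Definition lext (w : sppf) (d : V) : V := if w is Some (k, _, _) then k else d.

(* [w] covers the input from the vertex of the GSS node [u] to [i]; the dummy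
   SPPF node [None] covers the empty span at [i]. *)
Definition spans (u : gss) (i : V) (w : sppf) : bool :=
  [&& oapp (fun n => valid_slot n.1) true u, oapp (fun n => valid_label n.1.2) true w,
      rext w i == i & oapp (fun n => lext w i == n.2) true u].

Definition pair_key (i : V) (u : gss) (w : sppf) : option slot * V * option label :=
  (omap fst u, lext w (oapp snd i u), omap (fun n => n.1.2) w).

Definition pair_of_key (i : V) (key : option slot * V * option label) : gss * sppf :=
  (omap (fun L => (L, key.1.2)) key.1.1, omap (fun l => (key.1.2, l, i)) key.2).

Lemma pair_keyK u i w : spans u i w -> pair_of_key i (pair_key i u w) = (u, w).
Proof.
case: u w => [[L j]|] [[[k l] h]|] /and4P [_ _ /eqP /= rext_w /= lext_w] //=;
  by rewrite ?rext_w ?(eqP lext_w).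
Qed.

Definition pair_keys : seq (option slot * V * option label) :=
  pairs (pairs (opts slots) (enum V)) (opts labels).

Lemma mem_pair_keys u i w : spans u i w -> pair_key i u w \in pair_keys.
Proof.
case/and4P=> u_valid w_valid _ _.
rewrite !mem_pairs !mem_opts mem_enum andbT.
case: u u_valid => [[L j]|] /=; [move/mem_slots ->|];
  by case: w w_valid => [[[k l] h]|] //= /mem_labels.
Qed.

Local Arguments getNodeP : simpl never.

Lemma getNodeP_neq0 L (w : sppf) n : getNodeP L w (Some n) != None.
Proof.
rewrite /getNodeP; case: n => [[k l] i]; case: ifP => // _.
by case: w => [[[j ?] ?]|].
Qed.

Lemma spans_getNodeP L u k w l i :
  valid_slot L -> valid_label l -> spans u k w -> (size L.1.2 == 1) ==> (w == None) ->
  spans u i (getNodeP L w (Some (k, l, i))).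
Proof.
move=> L_valid l_valid /and4P [u_valid _ _ u_w] w_dummy; rewrite /getNodeP.
case: ifP => [/andP [/eqP L_size1 _] | _].
  move: w_dummy; rewrite L_size1 /= => /eqP w0.
  by move: u_w; rewrite w0 /spans u_valid /= l_valid eqxx.
have lab_valid : valid_label (if L.2 == [::] then inr (inr (inl L.1.1)) else inr (inr (inr L))).
  by case: ifP.
by case: w {w_dummy} u_w => [[[j ?] ?]|] u_w; rewrite /spans u_valid /= lab_valid eqxx.
Qed.

Definition desc_ok (d : desc) : bool :=
  let '(ol, u, i, w) := d in
  if ol is Some L then [&& valid_slot L, spans u i w & (w == None) == (L.1.2 == [::])]
  else (u == None) && (w == None).

Definition edge_ok (e : gss * sppf * gss) : bool :=
  if e is (Some (L, j), w, u)
  then [&& valid_slot L, L.1.2 != [::], spans u j w & (size L.1.2 == 1) ==> (w == None)]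
  else false.

Definition popped_ok (p : gss * sppf) : bool :=
  if p is (Some (_, j), Some (k, l, _)) then (k == j) && valid_label l else false.

Record gll_inv (st : state) : Prop := GllInv {
  inv_R : all desc_ok (R_ st);
  inv_U : all desc_ok (U_ st);
  inv_U_uniq : uniq (U_ st);
  inv_GE : all edge_ok (GE_ st);
  inv_GE_uniq : uniq (GE_ st);
  inv_P : all popped_ok (P_ st);
  inv_P_uniq : uniq (P_ st) }.

Lemma desc_ok_spans ol u i w : desc_ok (ol, u, i, w) -> spans u i w.
Proof.
by case: ol => [L /and3P [] // | /andP [/eqP -> /eqP ->]]; rewrite /spans /= eqxx.
Qed.

Definition desc_key (d : desc) : option slot * V * (option slot * V * option label) :=
  let '(ol, u, i, w) := d in (ol, i, pair_key i u w).

Definition desc_keys : seq (option slot * V * (option slot * V * option label)) :=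
  pairs (pairs (opts slots) (enum V)) pair_keys.

Lemma size_descs_le (ds : seq desc) :
  uniq ds -> all desc_ok ds -> size ds <= size desc_keys.
Proof.
move=> ds_uniq /allP ds_ok; apply: (size_le_inj_in (f := desc_key)) => //.
  move=> [[[ol u] i] w] [[[ol' u'] i'] w'] /ds_ok/desc_ok_spans d_ok /ds_ok/desc_ok_spans d'_ok.
  move/(congr1 (fun key => (key.1, pair_of_key key.1.2 key.2))).
  by rewrite /= !pair_keyK // => -[-> -> -> ->].
move=> [[[ol u] i] w] /ds_ok d_ok /=.
rewrite mem_pairs (mem_pair_keys (desc_ok_spans d_ok)) mem_pairs mem_enum mem_opts !andbT.
by case: ol d_ok => [L /and3P [/mem_slots] | ].
Qed.

Lemma size_edges_from (GE : seq (gss * sppf * gss)) L j :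
  uniq GE -> all edge_ok GE -> size [seq e <- GE | e.1.1 == Some (L, j)] <= size pair_keys.
Proof.
move=> GE_uniq /allP GE_ok.
apply: (size_le_inj_in (f := fun e => pair_key j e.2 e.1.2)); first exact: filter_uniq.
  move=> [[v w] u] [[v' w'] u']; rewrite !mem_filter /=.
  move=> /andP [/eqP -> /GE_ok /and4P [_ _ ok _]] /andP [/eqP -> /GE_ok /and4P [_ _ ok' _]].
  by move/(congr1 (pair_of_key j)); rewrite !pair_keyK // => -[-> ->].
move=> [[v w] u]; rewrite mem_filter /= => /andP [/eqP v_eq /GE_ok].
by rewrite v_eq => /and4P [_ _ /mem_pair_keys].
Qed.

Lemma size_popped_at (P : seq (gss * sppf)) L i :
  uniq P -> all popped_ok P -> size [seq pz <- P | pz.1 == Some (L, i)] <= size labels * #|V|.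
Proof.
move=> P_uniq /allP P_ok; rewrite cardE -(size_allpairs (fun l h => Some (i, l, h) : sppf)).
apply: (size_le_inj_in (f := snd)); first exact: filter_uniq.
  by move=> [u z] [u' z']; rewrite !mem_filter /= => /andP [/eqP -> _] /andP [/eqP -> _] ->.
move=> [u z]; rewrite mem_filter /= => /andP [/eqP u_eq /P_ok]; rewrite u_eq.
by case: z => [[[k l] h]|] //= /andP [/eqP -> /mem_labels l_in]; rewrite allpairs_f ?mem_enum.
Qed.

Lemma dispatch_ok Y i L :
  L \in dispatch G E Y i -> valid_slot L && (L.1.2 == [::]).
Proof.
rewrite /dispatch mem_undup => /flattenP [_ /mapP [e _ ->]] /mapP [p].
by rewrite mem_filter => /andP [_ p_G] ->; rewrite /valid_slot /= -surjective_pairing p_G.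
Qed.

Lemma size_dispatch Y i : size (dispatch G E Y i) <= size slots.
Proof.
apply: uniq_leq_size; first exact: undup_uniq.
by move=> L /dispatch_ok /andP [/mem_slots].
Qed.

(* Descriptors enter R and U together and leave only R, so [n] counts the
   descriptors processed on the way from [st] to [st']. *)
Definition processed (st st' : state) (n : nat) : Prop :=
  size (U_ st') + size (R_ st) = size (R_ st') + size (U_ st) + n.

Lemma processed_trans st1 st2 st3 m n :
  processed st1 st2 m -> processed st2 st3 n -> processed st1 st3 (m + n).
Proof. rewrite /processed; lia. Qed.

Lemma inv_add_all st ds :
  gll_inv st -> all desc_ok ds -> gll_inv (add_all st ds) /\ processed st (add_all st ds) 0.
Proof.
move=> [R_ok U_ok U_uniq GE_ok GE_uniq P_ok P_uniq] /allP ds_ok.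
have [new [new_ds new_uniq ->]] := add_allE st ds.
have new_ok : all desc_ok new by apply/allP => d /new_ds /ds_ok.
split; first by split; rewrite /= ?all_cat ?new_ok ?new_uniq.
by rewrite /processed /= !size_cat; lia.
Qed.

Lemma desc_ok_shift X alpha x beta u i w :
  desc_ok (Some (X, alpha, x :: beta), u, i, w) ->
  [/\ valid_slot (X, rcons alpha x, beta), spans u i w
    & (size (rcons alpha x) == 1) ==> (w == None)].
Proof.
case/and3P=> /valid_slot_shift L_valid u_w /eqP w_dummy.
by rewrite size_rcons eqSS size_eq0 w_dummy implybb.
Qed.

Lemma desc_ok_advance X alpha x beta u i w l h :
  desc_ok (Some (X, alpha, x :: beta), u, i, w) -> valid_label l ->
  desc_ok (Some (X, rcons alpha x, beta), u, h,
           getNodeP (X, rcons alpha x, beta) w (Some (i, l, h))).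
Proof.
case/desc_ok_shift=> L_valid u_w w_dummy l_valid.
by rewrite /= L_valid spans_getNodeP // (negbTE (getNodeP_neq0 _ _ _)) -size_eq0 size_rcons.
Qed.

Lemma pop_ok st u i z st' c :
  gll_inv st -> spans u i z -> z != None -> pop u i z st = (st', c) ->
  [/\ gll_inv st', processed st st' 0 & c <= (size pair_keys).+1].
Proof.
move=> st_inv; case: u => [[L j]|]; last first.
  by move=> _ _ [<- <-]; split; rewrite // /processed addn0 addnC.
case: z => [[[k l] h]|] // /and4P [/= L_valid l_valid /eqP -> /eqP /= ->] _ /=.
set st1 := if _ \in _ then _ else _.
have [st1_inv st1_R st1_U] : [/\ gll_inv st1, R_ st1 = R_ st & U_ st1 = U_ st].
  rewrite /st1; case: ifPn => [_ | fresh]; first by [].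
  by case: st_inv => *; split=> //; split; rewrite //= ?fresh ?eqxx ?l_valid.
case=> <- <-.
have new_ok : all desc_ok [seq (Some L, e.2, i, getNodeP L e.1.2 (Some (j, l, i)))
                          | e <- [seq e <- GE_ st | e.1.1 == Some (L, j)]].
  apply/allP => _ /mapP [[[v w] u'] + ->]; rewrite mem_filter /=.
  case/andP=> /eqP -> /(allP (inv_GE st_inv)) /and4P [_ L_nonnil u'_w w_dummy].
  by rewrite /= L_valid spans_getNodeP // (negbTE (getNodeP_neq0 _ _ _)) eq_sym (negbTE L_nonnil).
have [st'_inv growth] := inv_add_all st1_inv new_ok.
split=> //; first by move: growth; rewrite /processed st1_R st1_U.
by rewrite add1n ltnS size_edges_from ?(inv_GE st_inv) ?(inv_GE_uniq st_inv).
Qed.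

Lemma create_ok st X alpha Y beta u i w v st1 c :
  gll_inv st -> desc_ok (Some (X, alpha, inl Y :: beta), u, i, w) ->
  create (X, rcons alpha (inl Y), beta) u i w st = (v, st1, c) ->
  [/\ v = Some ((X, rcons alpha (inl Y), beta), i), gll_inv st1, processed st st1 0
    & c <= (size labels * #|V|).+1].
Proof.
move=> st_inv d_ok; have [L_valid u_w w_dummy] := desc_ok_shift d_ok.
rewrite /create; case: ifPn => [_ [<- <- <-] | fresh].
  by split; rewrite // /processed addn0 addnC.
set st_edge := State _ _ _ _; case=> <- <- <-.
have edge_inv : gll_inv st_edge.
  case: st_inv => *; split; rewrite //= ?fresh ?L_valid ?u_w ?w_dummy //.
  by rewrite -size_eq0 size_rcons.
have new_ok : all desc_ok
    [seq (Some (X, rcons alpha (inl Y), beta), u, rext z i,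
          getNodeP (X, rcons alpha (inl Y), beta) w z)
    | z <- [seq pz.2 | pz <- P_ st & pz.1 == Some ((X, rcons alpha (inl Y), beta), i)]].
  apply/allP => _ /mapP [_ /mapP [[v' z] + ->] ->]; rewrite mem_filter /=.
  case/andP=> /eqP -> /(allP (inv_P st_inv)).
  by case: z => [[[k l] h]|] //= /andP [/eqP -> l_valid]; apply: desc_ok_advance.
have [st1_inv growth] := inv_add_all edge_inv new_ok.
split=> //; rewrite add1n ltnS size_map.
exact: size_popped_at (inv_P_uniq st_inv) (inv_P st_inv).
Qed.

Definition maxdeg : nat := \max_(v : V) outdeg E v.

Definition step_bound : nat := (size slots).+1 * (size labels).+1 * (#|V| + maxdeg).+1.

Lemma outdeg_le_maxdeg i : outdeg E i <= maxdeg.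
Proof. exact: leq_bigmax. Qed.

Lemma size_pair_keys_lt : size pair_keys < step_bound.
Proof.
rewrite !size_pairs !size_opts -cardE /step_bound mulnAC ltn_pmul2l //.
by rewrite ltnS leq_addr.
Qed.

Lemma step_bound_ge : (size labels * #|V|).+1 + maxdeg + size slots <= step_bound.
Proof. rewrite /step_bound; move: (size slots) (size labels) #|V| maxdeg => s l n d; nia. Qed.

Lemma process_ok st d st' c :
  gll_inv st -> desc_ok d -> process G E d st = (st', c) ->
  [/\ gll_inv st', processed st st' 0 & c <= step_bound].
Proof.
have deg_i := outdeg_le_maxdeg; have bound := step_bound_ge.
move=> st_inv; case: d => [[[[[[X alpha] beta]|] u] i] w] d_ok; last first.
  case/andP: d_ok => /eqP -> /eqP ->; case=> <- <-.
  have new_ok : all desc_ok [seq (Some L, None, i, None) | L <- dispatch G E (start G) i].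
    apply/allP => _ /mapP [L /dispatch_ok /andP [L_valid /eqP L_init] ->].
    by rewrite /= L_valid L_init /spans /= !eqxx.
  have [st'_inv growth] := inv_add_all st_inv new_ok; split=> //.
  have := size_dispatch (start G) i; have := deg_i i; lia.
case: beta d_ok => [|[Y | a] beta] d_ok /=.
- case: alpha d_ok => [|x alpha] /and3P [L_valid u_w /eqP w_dummy] run_pop.
    have z_spans : spans u i (getNodeP (X, [::], [::]) w (Some (i, inr (inl tt), i))).
      exact: spans_getNodeP.
    have [st'_inv growth cost] := pop_ok st_inv z_spans (getNodeP_neq0 _ _ _) run_pop.
    by split=> //; apply: leq_trans cost size_pair_keys_lt.
  have [st'_inv growth cost] := pop_ok st_inv u_w (negbT w_dummy) run_pop.
  by split=> //; apply: leq_trans cost size_pair_keys_lt.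
- case create_run: create => [[v st1] c1]; case=> <- <-.
  have [-> st1_inv growth1 cost1] := create_ok st_inv d_ok create_run.
  have new_ok : all desc_ok [seq (Some L0, Some ((X, rcons alpha (inl Y), beta), i), i, None)
                            | L0 <- dispatch G E Y i].
    apply/allP => _ /mapP [L0 /dispatch_ok /andP [L0_valid /eqP L0_init] ->].
    case/desc_ok_shift: d_ok => L_valid _ _.
    by rewrite /= L0_valid L0_init /spans /= L_valid !eqxx.
  have [st'_inv growth] := inv_add_all st1_inv new_ok; split=> //.
    exact: (processed_trans growth1 growth).
  have := size_dispatch Y i; have := deg_i i; lia.
- case=> <- <-.
  have new_ok : all desc_ok
      [seq (Some (X, rcons alpha (inr a), beta), u, e.2,
            getNodeP (X, rcons alpha (inr a), beta) w (Some (i, inl a, e.2)))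
      | e <- [seq e <- out_edges E i | e.1.2 == a]].
    by apply/allP => _ /mapP [e _ ->]; apply: desc_ok_advance.
  have [st'_inv growth] := inv_add_all st_inv new_ok; split=> //.
  have := deg_i i; lia.
Qed.

Lemma step_ok st d st' c :
  gll_inv st -> d \in R_ st ->
  process G E d (State (rem d (R_ st)) (U_ st) (P_ st) (GE_ st)) = (st', c) ->
  [/\ gll_inv st', processed st st' 1 & c <= step_bound].
Proof.
move=> st_inv d_R; set st0 := State _ _ _ _ => run.
have st0_inv : gll_inv st0.
  by case: st_inv => R_ok *; split=> //=; apply/allP => x /mem_rem /(allP R_ok).
have removed : processed st st0 1.
  by rewrite /processed /= size_rem //; case: (R_ st) d_R => //= *; rewrite addnS addn1 addnC.
have [st'_inv growth cost] := process_ok st0_inv (allP (inv_R st_inv) d d_R) run.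
by split=> //; exact: (processed_trans removed growth).
Qed.

Lemma runs_ok st st' c :
  runs G E st st' c -> gll_inv st ->
  gll_inv st' /\ exists2 n, c <= n * step_bound & processed st st' n.
Proof.
elim=> [st0 | st0 d st1 c0 st2 c1 d_R run _ IH] st0_inv.
  by split=> //; exists 0; rewrite // /processed addn0 addnC.
have [st1_inv removed cost] := step_ok st0_inv d_R run.
have [st2_inv [n cost_n growth]] := IH st1_inv.
split=> //; exists n.+1; first by rewrite mulSn leq_add.
exact: (processed_trans removed growth).
Qed.

Lemma inv_init (Vs : {set V}) : gll_inv (init N T Vs).
Proof.
have init_ok : all desc_ok [seq (None, None, v, None) : desc | v <- enum Vs].
  by apply/allP => _ /mapP [v _ ->].
split=> //=; rewrite map_inj_uniq ?enum_uniq //.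
by move=> x y [].
Qed.

Lemma runs_init_cost (Vs : {set V}) st c :
  runs G E (init N T Vs) st c -> gll_inv st /\ c <= size (U_ st) * step_bound.
Proof.
case/runs_ok=> [|st_inv [n cost growth]]; first exact: inv_init.
split=> //; apply: leq_trans cost _; rewrite leq_mul2r; apply/orP; right.
by move: growth; rewrite /processed /=; lia.
Qed.

Lemma desc_keys_step_bound :
  size desc_keys * step_bound
  <= 3 * (size slots).+1 ^ 3 * (size labels).+1 ^ 2 * #|V| ^ 3 * maxn 1 maxdeg.
Proof.
rewrite !size_pairs !size_opts -cardE /step_bound.
have := sq_mul_le_cube #|V| maxdeg.
move: (size slots).+1 (size labels).+1 #|V| maxdeg (maxn 1 maxdeg) => s l n d m h.
have -> : s * n * (s * n * l) * (s * l * (n + d).+1) = s ^ 3 * l ^ 2 * (n ^ 2 * (n + d).+1).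
  lia.
have -> : 3 * s ^ 3 * l ^ 2 * n ^ 3 * m = s ^ 3 * l ^ 2 * (3 * n ^ 3 * m) by lia.
by rewrite leq_mul2l h orbT.
Qed.

End GLLComplexity.

Theorem theorem4 (N T : finType) (G : grammar N T) :
  exists C : nat,
    forall (V : finType) (E : {set V * T * V}) (Vs Vf : {set V})
           (st : state N T V) (c : nat),
      runs G E (init N T Vs) st c ->
      c <= C * #|V| ^ 3 * maxn 1 (\max_(v : V) outdeg E v).
Proof.
exists (3 * (size (slots G)).+1 ^ 3 * (size (labels G)).+1 ^ 2).
move=> V E Vs _ st c /runs_init_cost [st_inv cost].
have U_le := size_descs_le (inv_U_uniq st_inv) (inv_U st_inv).
apply: leq_trans cost (leq_trans (leq_mul U_le (leqnn _)) _).
exact: desc_keys_step_bound.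
Qed.
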